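(* (a) If $G\in\mathcal U$ has at least one support vertex $s$, then the graph $G'$ obtained from $G$ by adding a new vertex $w$ and the edge $sw$ is also in $\mathcal U$. (b) If $G\in\mathcal U$ has a strong support vertex $s$ and $w$ is a leaf adjacent to $s$, then $G-w\in\mathcal U$.
   Context: All graphs are finite and simple. A set $P\subseteq V(G)$ is an open packing if no two distinct vertices of $P$ have a common neighbor; it is maximal if maximal under inclusion among open packings. $\rho^o(G)$ is the maximum size of an open packing and $\rho^o_L(G)$ the minimum size of a maximal open packing; $\mathcal U$ is the class of graphs with $\rho^o_L(G)=\rho^o(G)$. A leaf is a vertex of degree $1$, a support vertex is a vertex adjacent to at least one leaf, and a strong support vertex is one adjacent to at least two leaves. *)

From mathcomp Require Import all_boot.
Set Implicit Arguments. Unset Strict Implicit. Unset Printing Implicit Defensive.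

(* A finite simple graph is a finType T with a symmetric irreflexive
   adjacency relation e : rel T. *)

Section OpenPacking.
Variables (T : finType) (e : rel T).

Definition open_packing (P : {set T}) : bool :=
  [forall u in P, forall v in P,
     (u != v) ==> ~~ [exists x, e u x && e v x]].

Definition maximal_open_packing (P : {set T}) : bool :=
  open_packing P && [forall Q : {set T}, (P \proper Q) ==> ~~ open_packing Q].

Definition rho_o : nat := \max_(P : {set T} | open_packing P) #|P|.

(* rho^o_L(G): minimum size of a maximal open packing
   (maximal open packings always exist and have size <= #|T|) *)
Definition rho_oL : nat :=
  \big[minn/#|T|]_(P : {set T} | maximal_open_packing P) #|P|.

Definition in_U : bool := rho_oL == rho_o.

Definition leaf (v : T) : bool := #|[set x | e v x]| == 1.
Definition support_vertex (s : T) : bool := [exists v, e s v && leaf v].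
Definition strong_support_vertex (s : T) : bool :=
  1 < #|[set v | e s v && leaf v]|.

End OpenPacking.

Definition add_pendant (T : finType) (e : rel T) (s : T) : rel (option T) :=
  fun x y => match x, y with
             | Some a, Some b => e a b
             | None, Some b => b == s
             | Some a, None => a == s
             | None, None => false
             end.

Definition del_vertex (T : finType) (e : rel T) (w : T) : rel {x : T | x != w} :=
  fun x y => e (val x) (val y).
Arguments del_vertex {T} e w.
Arguments add_pendant {T} e s.

From HB Require Import structures.
From mathcomp Require Import all_boot.
Set Implicit Arguments. Unset Strict Implicit. Unset Printing Implicit Defensive.

(* Both parts of the theorem are instances of one invariance principle.
   An open packing of G is exactly a packing for the "conflict" relation
   "u and v have a common neighbour": a set no two distinct elements of which
   conflict.  So rho^o and rho^o_L are the packing number and the lower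
   (maximal-)packing number of that conflict relation.

   1. For an arbitrary symmetric conflict relation we characterise maximal
      packings (every outside element conflicts with a member) and show that
      both numbers are attained.
   2. Retraction principle: if T2 embeds into T1 by f with a retraction k,
      k transports the conflicts of T1 to those of T2, and distinct elements
      identified by k conflict, then T1 and T2 have the same packing numbers.
   3. Adding a pendant vertex w at a support vertex s, and deleting a leaf w
      whose neighbour s carries a second leaf v, are both such retractions:
      w is a twin of a leaf v at s, and k sends w to v. *)

(* minn is associative and commutative, so the generic bigop lemmas needing
   only these laws (such as bigD1) apply to minima of natural numbers. *)
HB.instance Definition _ := SemiGroup.isComLaw.Build nat minn minnA minnC.

Lemma bigmin_le (I : finType) (P : pred I) (F : I -> nat) (x0 : nat) (i : I) :
  P i -> \big[minn/x0]_(j | P j) F j <= F i.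
Proof. by move=> Pi; rewrite (bigD1 i) //= geq_minl. Qed.

Section Packing.
Variables (T : finType) (c : rel T).

Definition packing (P : {set T}) : bool :=
  [forall u in P, forall v in P, (u != v) ==> ~~ c u v].

Definition maximal_packing (P : {set T}) : bool :=
  packing P && [forall Q : {set T}, (P \proper Q) ==> ~~ packing Q].

Definition packing_number : nat := \max_(P : {set T} | packing P) #|P|.

Definition lower_packing_number : nat :=
  \big[minn/#|T|]_(P : {set T} | maximal_packing P) #|P|.

Lemma packingP (P : {set T}) :
  reflect (forall u v, u \in P -> v \in P -> u != v -> ~~ c u v) (packing P).
Proof.
apply: (iffP forallP) => [packP u v uP vP neq_uv | packP u].
  by move: (packP u); rewrite uP => /forallP/(_ v); rewrite vP neq_uv.
apply/implyP => uP; apply/forallP => v; apply/implyP => vP; apply/implyP.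
exact: packP.
Qed.

Lemma packing_number_ge (P : {set T}) : packing P -> #|P| <= packing_number.
Proof. exact: (@leq_bigmax_cond _ packing (fun P : {set T} => #|P|)). Qed.

(* The maximum is attained (the empty set is a packing). *)
Lemma packing_number_attained : exists2 P, packing P & packing_number = #|P|.
Proof.
have set0_packing : packing set0 by apply/packingP => u v; rewrite inE.
have nonempty : 0 < #|packing| by apply/card_gt0P; exists set0.
by have [P packP def_max] := eq_bigmax_cond (fun P : {set T} => #|P|) nonempty; exists P.
Qed.

Lemma lower_packing_number_le (P : {set T}) :
  maximal_packing P -> lower_packing_number <= #|P|.
Proof. exact: bigmin_le. Qed.

(* A maximum packing cannot be properly extended. *)
Lemma maximal_packing_exists : exists P, maximal_packing P.
Proof.
have [P packP cardP] := packing_number_attained.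
exists P; rewrite /maximal_packing packP; apply/forallP => Q; apply/implyP.
move=> ltPQ; apply/negP => /packing_number_ge.
by rewrite cardP leqNgt proper_card.
Qed.

Lemma lower_packing_number_attained :
  exists2 P, maximal_packing P & lower_packing_number = #|P|.
Proof.
have [P0 maxP0] := maximal_packing_exists.
case: (arg_minnP (fun P : {set T} => #|P|) maxP0) => P maxP minP.
exists P => //; apply/eqP; rewrite eqn_leq lower_packing_number_le //=.
apply: (big_ind (fun m => #|P| <= m)) => [|m n|]; first exact: max_card.
  by rewrite leq_min => -> ->.
exact: minP.
Qed.

Hypothesis c_sym : symmetric c.

Lemma maximal_packingP (P : {set T}) :
  reflect (packing P /\ forall x, x \notin P -> exists2 u, u \in P & c u x)
          (maximal_packing P).
Proof.
apply: (iffP andP) => -[packP maxP]; split => //.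
  move=> x xP; have [/exists_inP[u uP cux]|no_conflict] := boolP [exists u in P, c u x].
    by exists u.
  (* otherwise x |: P would be a strictly larger packing *)
  have /implyP/(_ _)/negP[] := forallP maxP (x |: P).
    by rewrite properUr // sub1set.
  apply/packingP => u v; rewrite !inE => /predU1P[->|uP] /predU1P[->|vP];
    rewrite ?eqxx // => neq_uv; last by move/packingP: packP; apply.
    by rewrite c_sym; apply: contra no_conflict => cvx; apply/exists_inP; exists v.
  by apply: contra no_conflict => cux; apply/exists_inP; exists u.
apply/forallP => Q; apply/implyP => /properP[subPQ [x xQ xP]].
apply/negP => /packingP packQ; have [u uP cux] := maxP x xP.
have neq_ux : u != x by apply: contraNneq xP => <-.
by move: (packQ u x (subsetP subPQ u uP) xQ neq_ux); rewrite cux.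
Qed.

End Packing.

Section Retraction.
Variables (T1 T2 : finType) (c1 : rel T1) (c2 : rel T2).
Variables (f : T2 -> T1) (k : T1 -> T2).
Hypothesis fK : cancel f k.
Hypothesis c2_sym : symmetric c2.
Hypothesis conflict_k : forall a b, c1 a b = c2 (k a) (k b).
Hypothesis conflict_fibre : forall a b, k a = k b -> a != b -> c1 a b.

Let c1_sym : symmetric c1.
Proof. by move=> a b; rewrite !conflict_k c2_sym. Qed.

(* On a packing k is injective, so it preserves packings and their sizes. *)
Lemma card_retract (P : {set T1}) : packing c1 P -> #|k @: P| = #|P|.
Proof.
move/packingP=> packP; apply: card_in_imset => a b aP bP eq_kab.
apply/eqP; apply: contraT => neq_ab.
by move: (packP a b aP bP neq_ab); rewrite (conflict_fibre eq_kab neq_ab).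
Qed.

Lemma packing_retract (P : {set T1}) : packing c1 P -> packing c2 (k @: P).
Proof.
move/packingP=> packP; apply/packingP => _ _ /imsetP[a aP ->] /imsetP[b bP ->].
by move=> neq_kab; rewrite -conflict_k packP //; apply: contraNneq neq_kab => ->.
Qed.

Lemma packing_embed (Q : {set T2}) : packing c2 Q -> packing c1 (f @: Q).
Proof.
move/packingP=> packQ; apply/packingP => _ _ /imsetP[a aQ ->] /imsetP[b bQ ->].
by move=> neq_fab; rewrite conflict_k !fK packQ //; apply: contraNneq neq_fab => ->.
Qed.

(* If y is outside k @: P then f y is outside P, so f y conflicts with P. *)
Lemma maximal_retract (P : {set T1}) :
  maximal_packing c1 P -> maximal_packing c2 (k @: P).
Proof.
case/(maximal_packingP c1_sym) => packP maxP.
apply/(maximal_packingP c2_sym); split; first exact: packing_retract.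
move=> y yP; have fyP : f y \notin P by apply: contra yP => /(imset_f k); rewrite fK.
have [u uP cu] := maxP _ fyP; exists (k u); first exact: imset_f.
by rewrite -[y]fK -conflict_k.
Qed.

(* An element outside f @: Q either lies in the k-fibre of a member of Q,
   with which it conflicts, or k maps it outside Q. *)
Lemma maximal_embed (Q : {set T2}) :
  maximal_packing c2 Q -> maximal_packing c1 (f @: Q).
Proof.
case/(maximal_packingP c2_sym) => packQ maxQ.
apply/(maximal_packingP c1_sym); split; first exact: packing_embed.
move=> x xQ; have [kxQ|kxQ] := boolP (k x \in Q).
  exists (f (k x)); first exact: imset_f.
  by apply: conflict_fibre; [rewrite fK | apply: contraNneq xQ => <-; apply: imset_f].
have [u uQ cu] := maxQ _ kxQ; exists (f u); first exact: imset_f.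
by rewrite conflict_k fK.
Qed.

Lemma retract_packing_numbers :
  packing_number c1 = packing_number c2 /\
  lower_packing_number c1 = lower_packing_number c2.
Proof.
split; apply/eqP; rewrite eqn_leq; apply/andP; split.
- have [P packP ->] := packing_number_attained c1.
  by rewrite -card_retract // packing_number_ge // packing_retract.
- have [Q packQ ->] := packing_number_attained c2.
  by rewrite -(card_imset _ (can_inj fK)) packing_number_ge // packing_embed.
- have [Q maxQ ->] := lower_packing_number_attained c2.
  by rewrite -(card_imset _ (can_inj fK)) lower_packing_number_le // maximal_embed.
- have [P maxP ->] := lower_packing_number_attained c1.
  have packP : packing c1 P by case/andP: maxP.
  by rewrite -card_retract // lower_packing_number_le // maximal_retract.
Qed.

End Retraction.

Definition common_nbr (T : finType) (e : rel T) : rel T :=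
  fun u v => [exists x, e u x && e v x].

Lemma common_nbr_sym (T : finType) (e : rel T) : symmetric (common_nbr e).
Proof. by move=> u v; apply/existsP/existsP => -[x]; rewrite andbC; exists x. Qed.

Lemma in_U_retract (T1 T2 : finType) (e1 : rel T1) (e2 : rel T2)
    (f : T2 -> T1) (k : T1 -> T2) :
  cancel f k ->
  (forall a b, common_nbr e1 a b = common_nbr e2 (k a) (k b)) ->
  (forall a b, k a = k b -> a != b -> common_nbr e1 a b) ->
  in_U e1 = in_U e2.
Proof.
move=> fK conflict_k conflict_fibre.
have [eq_rho eq_rhoL] :=
  retract_packing_numbers fK (@common_nbr_sym _ e2) conflict_k conflict_fibre.
by rewrite /in_U; congr (_ == _).
Qed.

Lemma leaf_nbr (T : finType) (e : rel T) (v s : T) :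
  leaf e v -> e v s -> forall y, e v y = (y == s).
Proof.
move=> /cards1P[a nbr_v] evs y.
have nbrE z : e v z = (z == a) by rewrite -in_set1 -nbr_v inE.
by rewrite nbrE in evs *; rewrite (eqP evs).
Qed.

Section AddPendant.
Variables (T : finType) (e : rel T) (s v : T).
Hypothesis e_sym : symmetric e.
Hypothesis esv : e s v.
Hypothesis leaf_v : leaf e v.

Let evs : e v s. Proof. by rewrite e_sym. Qed.

(* Collapse the new pendant vertex onto the existing leaf v, its twin. *)
Definition collapse_pendant (x : option T) : T := if x is Some a then a else v.

Lemma add_pendant_adj (a : option T) (y : T) :
  add_pendant e s a (Some y) = e (collapse_pendant a) y.
Proof. by case: a => [a|] //=; rewrite (leaf_nbr leaf_v evs). Qed.

Lemma common_nbr_add_pendant (a b : option T) :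
  common_nbr (add_pendant e s) a b =
  common_nbr e (collapse_pendant a) (collapse_pendant b).
Proof.
apply/existsP/existsP => [[x]|[y]]; last by exists (Some y); rewrite !add_pendant_adj.
case: x => [y|]; first by rewrite !add_pendant_adj; exists y.
(* the new vertex as common neighbour: a = b = s, which also has neighbour v *)
by case: a b => [a|] [b|] /andP[//= /eqP-> /eqP->]; exists v; rewrite esv.
Qed.

Lemma common_nbr_pendant_fibre (a b : option T) :
  collapse_pendant a = collapse_pendant b -> a != b ->
  common_nbr (add_pendant e s) a b.
Proof.
move=> eq_ab neq_ab.
have col_v : collapse_pendant a = v.
  by case: a b eq_ab neq_ab => [a|] [b|] //= -> //; rewrite eqxx.
by apply/existsP; exists (Some s); rewrite !add_pendant_adj -eq_ab col_v evs.
Qed.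

Lemma in_U_add_pendant : in_U (add_pendant e s) = in_U e.
Proof.
apply: (in_U_retract (f := Some) (k := collapse_pendant)) => //.
  exact: common_nbr_add_pendant.
exact: common_nbr_pendant_fibre.
Qed.

End AddPendant.

Section DeleteTwinLeaf.
Variables (T : finType) (e : rel T) (s v w : T).
Hypothesis e_sym : symmetric e.
Hypotheses (esv : e s v) (esw : e s w).
Hypotheses (leaf_v : leaf e v) (leaf_w : leaf e w).
Hypothesis v_neq_w : v != w.

Let evs : e v s. Proof. by rewrite e_sym. Qed.
Let ews : e w s. Proof. by rewrite e_sym. Qed.

Let twin_adj (z : T) : e w z = e v z.
Proof. by rewrite (leaf_nbr leaf_w ews) (leaf_nbr leaf_v evs). Qed.

(* Send the deleted leaf w onto its twin v, and every other vertex to itself. *)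
Definition merge_twin : T -> {x : T | x != w} := insubd (exist _ v v_neq_w).

Lemma val_merge_twin (a : T) : val (merge_twin a) = if a == w then v else a.
Proof.
rewrite /merge_twin /insubd; case: insubP => [u a_neq_w -> | ] /=.
  by rewrite (negbTE a_neq_w).
by rewrite negbK => ->.
Qed.

Lemma merge_twin_adj (a z : T) : e (val (merge_twin a)) z = e a z.
Proof. by rewrite val_merge_twin; case: eqP => [->|//]; rewrite twin_adj. Qed.

Lemma common_nbr_del_vertex (a b : T) :
  common_nbr e a b = common_nbr (del_vertex e w) (merge_twin a) (merge_twin b).
Proof.
apply/existsP/existsP => [[z]|[z]]; last by rewrite /del_vertex !merge_twin_adj; exists (val z).
have [-> | z_neq_w] := eqVneq z w; last first.
  by exists (exist _ z z_neq_w); rewrite /del_vertex !merge_twin_adj.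
(* w as common neighbour: a = b = s, which also has the neighbour v *)
rewrite -!(e_sym w) !twin_adj !(leaf_nbr leaf_v evs) => /andP[/eqP-> /eqP->].
by exists (exist _ v v_neq_w); rewrite /del_vertex !merge_twin_adj /= esv.
Qed.

Lemma common_nbr_merge_fibre (a b : T) :
  merge_twin a = merge_twin b -> a != b -> common_nbr e a b.
Proof.
move=> /(congr1 val); rewrite !val_merge_twin => eq_ab neq_ab.
(* distinct vertices with the same image are w and v, both adjacent to s *)
apply/existsP; exists s.
move: eq_ab neq_ab; case: (eqVneq a w) => [->|_]; case: (eqVneq b w) => [->|_].
- by [].
- by move=> <-; rewrite ews evs.
- by move=> ->; rewrite ews evs.
- by move=> ->; rewrite eqxx.
Qed.

Lemma in_U_del_vertex : in_U (del_vertex e w) = in_U e.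
Proof.
symmetry; apply: (in_U_retract (f := val) (k := merge_twin)).
- exact: valKd.
- exact: common_nbr_del_vertex.
- exact: common_nbr_merge_fibre.
Qed.

End DeleteTwinLeaf.

Lemma strong_support_other_leaf (T : finType) (e : rel T) (s w : T) :
  strong_support_vertex e s -> exists v, [/\ e s v, leaf e v & v != w].
Proof.
case/card_gt1P => x [y [xL yL neq_xy]].
have [v vL v_neq_w] : exists2 v, v \in [set v | e s v && leaf e v] & v != w.
  by case: (eqVneq x w) => [x_w | x_neq_w]; [exists y; rewrite // -x_w eq_sym | exists x].
by move: vL; rewrite inE => /andP[esv leaf_v]; exists v.
Qed.

(* Part (a) keeps U by collapsing the new pendant vertex onto an old leaf at s;
   part (b) by merging w into a second leaf at s. *)
Theorem mainTheorem3 (T : finType) (e : rel T) :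
  symmetric e -> irreflexive e ->
  (forall s : T, in_U e -> support_vertex e s -> in_U (add_pendant e s)) /\
  (forall s w : T, in_U e -> strong_support_vertex e s -> e s w -> leaf e w ->
     in_U (del_vertex e w)).
Proof.
move=> e_sym _; split.
- move=> s inUe /existsP[v /andP[esv leaf_v]].
  by rewrite (in_U_add_pendant e_sym esv leaf_v).
- move=> s w inUe strong_s esw leaf_w.
  have [v [esv leaf_v v_neq_w]] := strong_support_other_leaf w strong_s.
  by rewrite (in_U_del_vertex e_sym esv esw leaf_v leaf_w v_neq_w).
Qed.
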